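(* Let $F_n$ be the Fibonacci numbers, $F_1=F_2=1$, $F_n=F_{n-1}+F_{n-2}$. For $n\ge 1$ put $$\omega_n=\frac{F_{n+2}^2F_{n+3}}{F_{n+1}^2F_n}$$ and consider the cubic equation $$t(2t-1)^2=(t-1)\,\omega_n,$$ whose roots are real and satisfy $G<0<G'<G''$. Then: (a) $G''$ is rational when $n$ is odd, and $G'$ is rational when $n$ is even; (b) this rational root equals $\dfrac{F_{n+3}}{2F_{n+1}}$.
   Context: Background (not needed for the algebraic statement): with $\phi_n=F_{n+1}/F_n$, the $n$-th Fibonacci pentagram has Gauss coordinates $(\alpha,\beta,\gamma,\delta,\epsilon)=(\phi_{n+1},\phi_{n+1},\phi_n,\phi_{n+2}\phi_{n+1}/\phi_n,\phi_n)$, which satisfy $1+\alpha=\gamma\delta$, $1+\beta=\delta\epsilon$, $1+\gamma=\epsilon\alpha$, $1+\delta=\alpha\beta$, $1+\epsilon=\beta\gamma$, and $\omega_n=\alpha\beta\gamma\delta\epsilon=\phi_n\phi_{n+1}^3\phi_{n+2}$. The cubic above is the characteristic equation for the eigenvalues $G,G',G''$ of the quadratic form whose null cone circumscribes the pentagram. *)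

From mathcomp Require Import all_boot all_order all_algebra.
Set Implicit Arguments. Unset Strict Implicit. Unset Printing Implicit Defensive.
Import Order.TTheory GRing.Theory Num.Theory.
Local Open Scope ring_scope.

Fixpoint fib (n : nat) : nat :=
  match n with
  | 0 => 0
  | 1 => 1
  | (m.+1 as k).+1 => fib k + fib m
  end.

Definition omega (R : realFieldType) (n : nat) : R :=
  ((fib n.+2)%:R ^+ 2 * (fib n.+3)%:R) / ((fib n.+1)%:R ^+ 2 * (fib n)%:R).

Definition cubic_eq (R : realFieldType) (n : nat) (t : R) : Prop :=
  t * (2 * t - 1) ^+ 2 = (t - 1) * omega R n.

Definition is_rational (R : realFieldType) (x : R) : Prop :=
  exists q : rat, x = ratr q.

(* The rational root is r = F_{n+3} / (2 F_{n+1}): with F_{n+3} = F_{n+2} + F_{n+1} and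
   F_{n+2} = F_{n+1} + F_n one checks directly that it solves the cubic. Dividing the cubic
   by t - r leaves a quadratic whose roots have product -omega_n / (4 r) < 0, so they lie on
   either side of 0. Whether r is the middle or the largest root is the sign of the quadratic
   at r, which equals the sign of F_{n+3} F_n - F_{n+2} F_{n+1} = (-1)^(n+1) (Cassini). *)
From mathcomp Require Import all_boot all_order all_algebra.
From mathcomp Require Import ring.
Import Order.TTheory GRing.Theory Num.Theory.
Local Open Scope ring_scope.

Section CubicWithPositiveRoot.

Variables (R : rcfType) (w r : R).
Hypotheses (w_gt0 : 0 < w) (r_gt0 : 0 < r).
Hypothesis cubic_r : r * (2 * r - 1) ^+ 2 = (r - 1) * w.

Let disc := (1 - r) ^+ 2 + w / r.
Let lo := (1 - r - Num.sqrt disc) / 2.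
Let hi := (1 - r + Num.sqrt disc) / 2.

Lemma abs_lt_sqrt_disc : `|1 - r| < Num.sqrt disc.
Proof.
have disc_gt : (1 - r) ^+ 2 < disc by rewrite ltrDl divr_gt0.
by rewrite -sqrtr_sqr ltr_sqrt // (le_lt_trans (sqr_ge0 _) disc_gt).
Qed.

Lemma lo_lt0 : lo < 0.
Proof.
by rewrite pmulr_llt0 ?invr_gt0 // subr_lt0 (le_lt_trans (ler_norm _) abs_lt_sqrt_disc).
Qed.

Lemma hi_gt0 : 0 < hi.
Proof.
rewrite pmulr_lgt0 ?invr_gt0 // -ltrBlDl sub0r opprB.
by rewrite (le_lt_trans _ abs_lt_sqrt_disc) // distrC ler_norm.
Qed.

Lemma cofactor_split (t : R) :
  4 * (t - lo) * (t - hi) = 4 * t ^+ 2 + 4 * (r - 1) * t - w / r.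
Proof.
have sqrt_disc2 : Num.sqrt disc ^+ 2 = disc.
  by rewrite sqr_sqrtr // addr_ge0 ?sqr_ge0 ?divr_ge0 ?ltW.
transitivity (4 * t ^+ 2 + 4 * (r - 1) * t + (1 - r) ^+ 2 - Num.sqrt disc ^+ 2).
  by rewrite /lo /hi; field.
by rewrite sqrt_disc2 /disc; ring.
Qed.

Lemma cubic_factor (t : R) :
  t * (2 * t - 1) ^+ 2 - (t - 1) * w = 4 * (t - r) * (t - lo) * (t - hi).
Proof.
have r_neq0 : r != 0 by rewrite gt_eqF.
transitivity ((t - r) * (4 * (t - lo) * (t - hi))); last by ring.
rewrite cofactor_split.
(* the remainder of the division by t - r is t / r times the value of the cubic at r *)
transitivity ((t - r) * (4 * t ^+ 2 + 4 * (r - 1) * t - w / r)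
              + t / r * (r * (2 * r - 1) ^+ 2 - (r - 1) * w)); first by field.
by rewrite cubic_r subrr mulr0 addr0.
Qed.

Lemma cubic_with_positive_root :
  exists G s : R,
    [/\ G < 0 < s,
        forall t, t * (2 * t - 1) ^+ 2 = (t - 1) * w <-> t = r \/ t = G \/ t = s
      & Num.sg (r - s) = Num.sg (8 * r ^+ 3 - 4 * r ^+ 2 - w)].
Proof.
exists lo, hi; split.
- by rewrite lo_lt0 hi_gt0.
- move=> t; split=> [/eqP|t_root].
    rewrite -subr_eq0 cubic_factor !mulf_eq0 pnatr_eq0 /= !subr_eq0.
    by case/orP=> [/orP[]|] /eqP; tauto.
  apply/eqP; rewrite -subr_eq0 cubic_factor.
  by case: t_root => [|[|]] ->; rewrite subrr !(mulr0, mul0r).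
- have -> : 8 * r ^+ 3 - 4 * r ^+ 2 - w = (4 * r * (r - lo)) * (r - hi).
    transitivity (r * (4 * (r - lo) * (r - hi))); last by ring.
    by rewrite cofactor_split; field; rewrite gt_eqF.
  have r_gt_lo : 0 < r - lo by rewrite subr_gt0 (lt_trans lo_lt0).
  by rewrite sgrM [Num.sg (4 * r * _)]gtr0_sg ?mul1r // !mulr_gt0.
Qed.

End CubicWithPositiveRoot.

Lemma fib_gt0 n : (0 < n)%N -> (0 < fib n)%N.
Proof.
elim: n => [//|[//|n] IH] _.
by rewrite /= addn_gt0 IH.
Qed.

Lemma natr_fibSS (R : pzSemiRingType) n :
  (fib n.+2)%:R = (fib n.+1)%:R + (fib n)%:R :> R.
Proof. by rewrite -natrD. Qed.

Lemma natr_fib_cassini (R : comPzRingType) n :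
  (fib n.+3)%:R * (fib n)%:R - (fib n.+2)%:R * (fib n.+1)%:R = (-1) ^+ n.+1 :> R.
Proof.
elim: n => [|n IH]; first by rewrite /=; ring.
rewrite exprS -IH !natr_fibSS.
ring.
Qed.

Definition fib_ratio (R : fieldType) n : R := (fib n.+3)%:R / (2 * (fib n.+1)%:R).

Section FibonacciRoot.

Variables (R : realFieldType) (n : nat).
Hypothesis n_gt0 : (0 < n)%N.

Let natr_fib_gt0 k : (0 < k)%N -> 0 < (fib k)%:R :> R.
Proof. by move=> k_gt0; rewrite ltr0n fib_gt0. Qed.

Lemma fib_ratio_rational : is_rational (fib_ratio R n).
Proof. by exists (fib_ratio rat n); rewrite fmorph_div rmorphM /= !rmorph_nat. Qed.

Lemma fib_ratio_gt0 : 0 < fib_ratio R n.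
Proof. by rewrite divr_gt0 ?mulr_gt0 ?natr_fib_gt0. Qed.

Lemma omega_gt0 : 0 < omega R n.
Proof. by rewrite divr_gt0 ?mulr_gt0 ?exprn_gt0 ?natr_fib_gt0. Qed.

Lemma cubic_eq_fib_ratio : cubic_eq n (fib_ratio R n).
Proof.
have a_neq0 : (fib n)%:R != 0 :> R by rewrite gt_eqF ?natr_fib_gt0.
have b_neq0 : (fib n.+1)%:R != 0 :> R by rewrite gt_eqF ?natr_fib_gt0.
rewrite /cubic_eq /omega /fib_ratio !natr_fibSS.
by field; rewrite a_neq0 b_neq0.
Qed.

Lemma sg_fib_ratio_cubic :
  Num.sg (8 * fib_ratio R n ^+ 3 - 4 * fib_ratio R n ^+ 2 - omega R n) = (-1) ^+ n.+1.
Proof.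
set a : R := (fib n)%:R; set b : R := (fib n.+1)%:R.
set c : R := (fib n.+2)%:R; set d : R := (fib n.+3)%:R.
have [a_gt0 b_gt0 c_gt0 d_gt0] : [/\ 0 < a, 0 < b, 0 < c & 0 < d].
  by split; apply: natr_fib_gt0.
have -> : 8 * fib_ratio R n ^+ 3 - 4 * fib_ratio R n ^+ 2 - omega R n
          = d * c / (b ^+ 3 * a) * (d * a - c * b).
  have d_def : d = c + b by rewrite /d natr_fibSS.
  rewrite /fib_ratio /omega -/a -/b -/c -/d d_def.
  by field; rewrite !gt_eqF.
rewrite natr_fib_cassini sgrM gtr0_sg ?mul1r ?sgrX ?sgrN1 //.
by rewrite divr_gt0 ?mulr_gt0 ?exprn_gt0.
Qed.

End FibonacciRoot.

Theorem theorem5p4 (R : rcfType) (n : nat) (hn : (1 <= n)%N) :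
  exists G G' G'' : R,
    [/\ G < 0 /\ 0 < G' /\ G' < G'',
        (forall t : R, cubic_eq n t <-> t = G \/ t = G' \/ t = G''),
        (odd n -> is_rational G'' /\
                  G'' = (fib n.+3)%:R / (2 * (fib n.+1)%:R))
      & (~~ odd n -> is_rational G' /\
                  G' = (fib n.+3)%:R / (2 * (fib n.+1)%:R))].
Proof.
have [G [s [/andP[G_lt0 s_gt0] roots sg_r_s]]] :=
  @cubic_with_positive_root _ _ _ (omega_gt0 R n hn) (fib_ratio_gt0 R n)
    (cubic_eq_fib_ratio R n hn).
rewrite sg_fib_ratio_cubic // -signr_odd oddS in sg_r_s.
have r_rat := fib_ratio_rational R n.
case: (boolP (odd n)) => n_odd.
- move: sg_r_s; rewrite n_odd expr0 => /eqP; rewrite sgr_cp0 subr_gt0 => s_lt_r.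
  exists G, s, (fib_ratio R n); split=> // t.
  by rewrite /cubic_eq roots; tauto.
- move: sg_r_s; rewrite (negbTE n_odd) expr1 => /eqP; rewrite sgr_cp0 subr_lt0 => r_lt_s.
  exists G, (fib_ratio R n), s; split=> //; first by rewrite fib_ratio_gt0.
  by move=> t; rewrite /cubic_eq roots; tauto.
Qed.
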